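(* Let $q\ge 2$ be a prime power and let $\alpha,\beta$ be vertices of $\Gamma_q$ with $d_{\Gamma_q}(\alpha,\beta)=3$. Then $A=N^2_{\Gamma_q}[\alpha]\cup N^2_{\Gamma_q}[\beta]$ is a perfect dominating set of $\Gamma_q$ and $|A|=2(q+1)^2$.
   Context: Let $q\ge 2$ be a prime power and $\mathbb{F}_q$ the field with $q$ elements; in the vertex labels below the symbol $q$ is also used as an extra formal symbol not belonging to $\mathbb{F}_q$, and all arithmetic is in $\mathbb{F}_q$. $\Gamma_q$ is the bipartite graph with parts $V_0,V_1$, where for $r\in\{0,1\}$ the set $V_r$ consists of the vertices $(a,b,c)_r$ with $a\in\mathbb{F}_q\cup\{q\}$, $b,c\in\mathbb{F}_q$, together with the vertices $(q,q,a)_r$ with $a\in\mathbb{F}_q\cup\{q\}$. The edges are given by: for $a,b,c\in\mathbb{F}_q$, $N((a,b,c)_1)=\{(x,\,ax+b,\,a^2x+2ab+c)_0: x\in\mathbb{F}_q\}\cup\{(q,a,c)_0\}$; for $b,c\in\mathbb{F}_q$, $N((q,b,c)_1)=\{(c,b,x)_0: x\in\mathbb{F}_q\}\cup\{(q,q,c)_0\}$; for $a\in\mathbb{F}_q\cup\{q\}$, $N((q,q,a)_1)=\{(q,a,x)_0: x\in\mathbb{F}_q\}\cup\{(q,q,q)_0\}$. There are no other edges. For a graph $G$, $d_G$ is the distance, $N^t_G(u)=\{x: d_G(u,x)=t\}$, $N^t_G[u]=\{x: d_G(u,x)\le t\}$, $N_G[u]=N^1_G[u]$. A set $U\subseteq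 V(G)$ is a perfect dominating set of $G$ if every vertex $x\in V(G)\setminus U$ has exactly one neighbour in $U$. *)

From HB Require Import structures.
From mathcomp Require Import all_boot all_order all_algebra all_field.
Set Implicit Arguments. Unset Strict Implicit. Unset Printing Implicit Defensive.
Import GRing.Theory.
Local Open Scope ring_scope.

(* Labels of a vertex in one part of Gamma_q:
   inl (inl (a,b,c))  ~ (a,b,c)   with a,b,c in F
   inl (inr (b,c))    ~ (q,b,c)   with b,c in F
   inr (Some a)       ~ (q,q,a)   with a in F
   inr None           ~ (q,q,q)                                       *)
Definition point (F : finFieldType) : finType :=
  ((F * F * F) + (F * F) + option F)%type.

(* adj1 u v : the part-1 vertex u_1 is adjacent to the part-0 vertex v_0 *)
Definition adj1 (F : finFieldType) (u v : point F) : bool :=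
  match u with
  | inl (inl (a, b, c)) =>
      match v with
      | inl (inl (x, y, z)) => (y == a * x + b) && (z == a ^+ 2 * x + 2%:R * a * b + c)
      | inl (inr (y, z)) => (y == a) && (z == c)
      | _ => false
      end
  | inl (inr (b, c)) =>
      match v with
      | inl (inl (x, y, _)) => (x == c) && (y == b)
      | inr (Some y) => y == c
      | _ => false
      end
  | inr (Some a) =>
      match v with
      | inl (inr (y, _)) => y == a
      | inr None => true
      | _ => false
      end
  | inr None =>
      match v with
      | inr _ => true
      | _ => false
      end
  end.

(* vertices of Gamma_q: (r, p) with r = true for V_1, r = false for V_0 *)
Definition vertex (F : finFieldType) : finType := (bool * point F)%type.

Definition gamma_adj (F : finFieldType) : rel (vertex F) :=
  fun u v =>
    match u, v with
    | (true, x), (false, y) => adj1 x y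
    | (false, x), (true, y) => adj1 y x
    | _, _ => false
    end.

Fixpoint ball (T : finType) (e : rel T) (t : nat) (u : T) : {set T} :=
  match t with
  | 0%N => [set u]
  | t'.+1 => ball e t' u :|: [set y | [exists x in ball e t' u, e x y]]
  end.

Definition dist_eq (T : finType) (e : rel T) (u v : T) (t : nat) : Prop :=
  v \in ball e t u /\ (forall s, (s < t)%N -> v \notin ball e s u).

Definition perfect_dominating (T : finType) (e : rel T) (U : {set T}) : Prop :=
  forall x, x \notin U -> #|[set y in U | e x y]| = 1%N.

From Pilot Require Import Defs.
From HB Require Import structures.
From mathcomp Require Import all_boot all_order all_algebra all_field.
From mathcomp Require Import ring zify.
Set Implicit Arguments. Unset Strict Implicit. Unset Printing Implicit Defensive.
Import GRing.Theory.

(* Gamma_q is the incidence graph of a generalized quadrangle of order q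
   (every vertex has q + 1 neighbours, there is no 4-cycle, and two vertices
   on opposite sides that are not adjacent are joined by exactly one walk of
   length three).  The proof only uses these properties:
   - around any vertex u, the closed ball of radius two consists of u, its
     q + 1 neighbours and (q + 1) q vertices at distance two, hence has
     (q + 1)^2 + 1 elements;
   - if d(alpha, beta) = 3 and alpha, x, y, beta is the walk joining them,
     the two balls meet exactly in {x, y}, which gives 2 (q + 1)^2;
   - a vertex z outside both balls has exactly one neighbour in the ball
     centred on the opposite side (the middle of the unique walk of length
     three) and none in the ball centred on its own side. *)

Lemma sum_nat_bool (T : finType) (P : pred T) : \sum_x (P x : nat) = #|[set x | P x]|.
Proof. by rewrite -sum1dep_card [RHS]big_mkcond /=; apply: eq_bigr => x _; case: (P x). Qed.

Lemma double_count (I J : finType) (R : I -> J -> bool) :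
  \sum_i #|[set j | R i j]| = \sum_j #|[set i | R i j]|.
Proof.
under eq_bigr do rewrite -sum_nat_bool.
by rewrite exchange_big; apply: eq_bigr => j _; rewrite sum_nat_bool.
Qed.

Lemma sum_card_rows (I J : finType) (b : pred I) (R : I -> J -> bool) (d : nat) :
  (forall i, b i -> #|[set j | R i j]| = d) ->
  \sum_i #|[set j | b i && R i j]| = #|[set i | b i]| * d.
Proof.
move=> Rd; rewrite -sum_nat_bool big_distrl /=; apply: eq_bigr => i _.
case Bi: (b i); last by rewrite mul0n; apply/eqP; rewrite cards_eq0; apply/eqP/setP => j; rewrite !inE.
by rewrite mul1n -(Rd i Bi); apply: eq_card => j; rewrite !inE.
Qed.

Lemma card_but_one (T : finType) (P : pred T) (a : T) :
  P a -> #|[set x | P x & x != a]| = #|[set x | P x]|.-1.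
Proof.
move=> Pa; rewrite (cardsD1 a [set x | P x]) inE Pa add1n /=.
by apply: eq_card => x; rewrite !inE andbC.
Qed.

Lemma sum_pos_eq_card (T : finType) (P : pred T) (c : T -> nat) :
  (forall i, P i -> 0 < c i) -> \sum_(i | P i) c i = #|[set i | P i]| ->
  forall i, P i -> c i = 1.
Proof.
move=> pos Hs i Pi.
have rest : #|[set j | P j & j != i]| <= \sum_(j | P j && (j != i)) c j.
  by rewrite -sum1dep_card; apply: leq_sum => j /andP[Pj _]; exact: pos.
move: Hs rest; rewrite (bigD1 i) //= (card_but_one Pi).
have := pos i Pi; have : 0 < #|[set j | P j]| by apply/card_gt0P; exists i; rewrite inE.
move: (\sum_(j | P j && (j != i)) c j) (#|[set j | P j]|) => s n; lia.
Qed.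

Lemma card_option_param (T A : finType) (S : {set T}) (f : option A -> T) :
  injective f -> (forall v, v \in S -> exists o, v = f o) -> (forall o, f o \in S) ->
  #|S| = #|A|.+1.
Proof.
move=> f_inj onto into; have -> : S = f @: setT.
  apply/setP=> v; apply/idP/imsetP => [/onto[o ->]|[o _ ->]] //; by exists o.
by rewrite card_imset // cardsT card_option.
Qed.

(* An incidence structure on a finite carrier [T] (playing the role of both
   points and lines, [inc l p] meaning "line l passes through point p") in
   which all degrees are k + 1, two lines share at most one point, there are
   (k + 1)(k^2 + 1) lines, and every point p off a line l is joined to l by
   a path l, p', m, p.  Then that path is unique (the axiom of generalized
   quadrangles): counting the paths from all lines to p, the lines off p
   receive (k + 1) k^2 paths in total, one at least for each of them. *)
Section QuadrangleCounting.

Variables (T : finType) (inc : T -> T -> bool) (k : nat).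
Hypothesis inc_quad : forall l l' p p',
  inc l p -> inc l p' -> inc l' p -> inc l' p' -> l = l' \/ p = p'.
Hypothesis inc_path3 : forall l p,
  ~~ inc l p -> exists p' m, [&& inc l p', inc m p' & inc m p].
Hypothesis deg_line : forall l, #|[set p | inc l p]| = k.+1.
Hypothesis deg_point : forall p, #|[set l | inc l p]| = k.+1.
Hypothesis card_lines : #|T| = k.+1 * (k * k + 1).

Variable p : T.

Definition flag (m p' : T) := [&& inc m p, inc m p' & p' != p].

(* The paths l, p', m, p, encoded by their flag (m, p'). *)
Definition paths_to (l : T) :=
  [set x : T * T | [&& flag x.1 x.2, inc l x.2 & l != x.1]].

Lemma card_flags : #|[set x : T * T | flag x.1 x.2]| = k.+1 * k.
Proof.
rewrite -sum_nat_bool -(pair_bigA _ (fun m p' => flag m p' : nat)) /=.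
under eq_bigr do rewrite sum_nat_bool.
rewrite (sum_card_rows (b := inc^~ p) (R := fun m p' => inc m p' && (p' != p)) (d := k)).
  by rewrite deg_point.
by move=> m mp; rewrite (card_but_one (P := inc m) mp) deg_line.
Qed.

(* No path reaches a line through p, as two lines share at most one point. *)
Lemma paths_to_on (l : T) : inc l p -> paths_to l = set0.
Proof.
move=> lp; apply/setP => [[m p']]; rewrite !inE /flag /=.
apply/negP => /andP[/and3P[mp mp' p'p] /andP[lp' lm]].
by case: (inc_quad lp lp' mp mp') => E; [rewrite E eqxx in lm | rewrite E eqxx in p'p].
Qed.

Lemma paths_to_off (l : T) : ~~ inc l p -> 0 < #|paths_to l|.
Proof.
move=> lp; case: (inc_path3 lp) => p' [m /and3P[lp' mp' mp]].
apply/card_gt0P; exists (m, p'); rewrite inE /flag /= mp mp' lp' /=.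
by apply/andP; split; [apply: contraNneq lp => <- | apply: contraNneq lp => ->].
Qed.

Lemma sum_paths_to : \sum_l #|paths_to l| = k.+1 * k * k.
Proof.
rewrite double_count.
rewrite (sum_card_rows (b := fun x : T * T => flag x.1 x.2)
           (R := fun x l => inc l x.2 && (l != x.1)) (d := k)).
  by rewrite card_flags.
move=> [m p'] /and3P[_ mp' _] /=.
by rewrite (card_but_one (P := inc^~ p') mp') deg_point.
Qed.

Lemma card_paths_to (l : T) : ~~ inc l p -> #|paths_to l| = 1.
Proof.
apply: (sum_pos_eq_card (P := fun l => ~~ inc l p) paths_to_off).
have off : #|[set l | ~~ inc l p]| = k.+1 * k * k.
  have -> : [set l | ~~ inc l p] = ~: [set l | inc l p] by apply/setP => l'; rewrite !inE.
  apply/eqP; rewrite -(eqn_add2l #|[set l | inc l p]|) cardsC.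
  by rewrite deg_point card_lines; apply/eqP; ring.
move: sum_paths_to; rewrite (bigID (inc^~ p)) /= big1 ?add0n => [->|l' lp].
  by rewrite off.
by rewrite paths_to_on ?cards0.
Qed.

Lemma path3_unique (l p1 m1 p2 m2 : T) :
  ~~ inc l p -> inc l p1 -> inc m1 p1 -> inc m1 p ->
  inc l p2 -> inc m2 p2 -> inc m2 p -> p1 = p2 /\ m1 = m2.
Proof.
move=> lp lp1 mp1 m1p lp2 mp2 m2p.
have inS p' m : inc l p' -> inc m p' -> inc m p -> (m, p') \in paths_to l.
  move=> lp' mp' mp; rewrite inE /flag /= mp mp' lp' /=.
  by apply/andP; split; [apply: contraNneq lp => <- | apply: contraNneq lp => ->].
move/eqP: (card_paths_to lp) => /cards1P[x Ex].
move: (inS _ _ lp1 mp1 m1p) (inS _ _ lp2 mp2 m2p).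
by rewrite Ex !inE => /eqP <- /eqP [-> ->].
Qed.

End QuadrangleCounting.

Section Balls.

Variables (T : finType) (e : rel T).

Lemma in_ballS (t : nat) (u v : T) :
  (v \in ball e t.+1 u) = (v \in ball e t u) || [exists x, (x \in ball e t u) && e x v].
Proof. by rewrite /= !inE. Qed.

Lemma in_ball1 (u v : T) : (v \in ball e 1 u) = (v == u) || e u v.
Proof.
rewrite in_ballS /= inE; congr (_ || _); apply/existsP/idP => [[x /andP[/set1P -> //]]|uv].
by exists u; rewrite inE eqxx.
Qed.

Lemma in_ball2 (u v : T) :
  reflect [\/ v = u, e u v | exists x, e u x /\ e x v] (v \in ball e 2 u).
Proof.
rewrite in_ballS in_ball1; apply: (iffP idP).
  case/orP => [/orP[/eqP->|uv]|/existsP[x /andP[]]]; [exact: Or31 | exact: Or32 |].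
  by rewrite in_ball1 => /orP[/eqP-> uv|ux xv]; [exact: Or32 | apply: Or33; exists x].
case=> [->|uv|[x [ux xv]]]; first by rewrite eqxx.
  by rewrite uv orbT.
by apply/orP; right; apply/existsP; exists x; rewrite in_ball1 ux orbT.
Qed.

Lemma ball3_minus_ball2 (u v : T) :
  v \in ball e 3 u -> v \notin ball e 2 u -> exists x y, [/\ e u x, e x y & e y v].
Proof.
rewrite in_ballS => /orP[-> //|/existsP[y /andP[/in_ball2 uy yv]]] far.
case: uy => [Ey|uy|[x [ux xy]]]; last by exists x, y.
  by subst y; case/negP: far; apply/in_ball2; apply: Or32.
by case/negP: far; apply/in_ball2; apply: Or33; exists y.
Qed.

End Balls.

Section QuadrangleGraph.

Variables (V : finType) (e : rel V) (side : V -> bool) (k : nat).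
Hypothesis e_sym : symmetric e.
Hypothesis e_side : forall u v, e u v -> side u != side v.
Hypothesis e_deg : forall u, #|[set v | e u v]| = k.+1.
Hypothesis e_quad : forall u v u' v',
  e u v -> e u v' -> e u' v -> e u' v' -> u = u' \/ v = v'.
Hypothesis e_path3 : forall u v,
  side u != side v -> ~~ e u v -> exists x y, [/\ e u x, e x y & e y v].
Hypothesis e_path3_unique : forall u v x1 y1 x2 y2,
  side u != side v -> ~~ e u v -> e u x1 -> e x1 y1 -> e y1 v ->
  e u x2 -> e x2 y2 -> e y2 v -> x1 = x2 /\ y1 = y2.

Local Notation B2 := (ball e 2).

Lemma side_path2 (u x v : V) : e u x -> e x v -> side u = side v.
Proof. by move=> /e_side + /e_side; case: (side u); case: (side x); case: (side v). Qed.

Lemma ball2_sym (u v : V) : v \in B2 u -> u \in B2 v.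
Proof.
move=> /in_ball2[->|uv|[x [ux xv]]]; apply/in_ball2; first exact: Or31.
  by apply: Or32; rewrite e_sym.
by apply: Or33; exists x; split; rewrite e_sym.
Qed.

Lemma ball2_other_side (a w : V) : w \in B2 a -> side w != side a -> e a w.
Proof.
case/in_ball2 => [->|//|[x [ax xw]]]; first by rewrite eqxx.
by rewrite (side_path2 ax xw) eqxx.
Qed.

(* A vertex z outside the ball of radius two around a vertex a of the other
   side has exactly one neighbour in that ball: the middle of the walk from
   a to z. *)
Lemma neighbours_in_ball2_far (a z : V) :
  side z != side a -> z \notin B2 a -> exists y, [set w in B2 a | e z w] = [set y].
Proof.
move=> sza far.
have naz : ~~ e a z by apply: contra far => az; apply/in_ball2; apply: Or32.
have saz : side a != side z by rewrite eq_sym.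
have [x [y [ax xy yz]]] := e_path3 saz naz.
exists y; apply/setP => w; rewrite in_set in_set1; apply/andP/eqP => [[/in_ball2 aw zw]|->].
  case: aw => [Ew|aw|[x' [ax' x'w]]].
  - by subst w; rewrite e_sym zw in naz.
  - by case/negP: far; apply/in_ball2; apply: Or33; exists w; split; last rewrite e_sym.
  - have wz : e w z by rewrite e_sym.
    by have [_ ->] := e_path3_unique saz naz ax xy yz ax' x'w wz.
split; last by rewrite e_sym.
by apply/in_ball2; apply: Or33; exists x.
Qed.

(* A vertex z outside the ball of radius two around a vertex b of its own
   side has no neighbour in that ball: such a neighbour would be adjacent to b. *)
Lemma neighbours_in_ball2_near (b z : V) :
  side z = side b -> z \notin B2 b -> [set w in B2 b | e z w] = set0.
Proof.
move=> szb far; apply/setP => w; rewrite in_set in_set0; apply/negP => /andP[bw zw].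
have bw' : e b w by apply: (ball2_other_side bw); rewrite -szb eq_sym; exact: e_side.
by case/negP: far; apply/in_ball2; apply: Or33; exists w; split; last rewrite e_sym.
Qed.

Lemma ball2_union_perfect (a b : V) :
  side a != side b -> perfect_dominating e (B2 a :|: B2 b).
Proof.
have one (c d z : V) : side z != side c -> side z = side d ->
    z \notin B2 c -> z \notin B2 d -> #|[set w in B2 c :|: B2 d | e z w]| = 1.
  move=> szc szd farc fard; have [y Ey] := neighbours_in_ball2_far szc farc.
  have E : [set w in B2 c :|: B2 d | e z w] = [set w in B2 c | e z w] :|: [set w in B2 d | e z w].
    by apply/setP => w; rewrite in_setU !in_set andb_orl.
  by rewrite E Ey neighbours_in_ball2_near // setU0 cards1.
move=> sab z; rewrite in_setU negb_or => /andP[fara farb].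
case: (eqVneq (side z) (side a)) => sza.
  by rewrite setUC; apply: one => //; rewrite sza.
by apply: one => //; apply/eqP; move: sza sab; case: (side z); case: (side a); case: (side b).
Qed.

Definition sphere2 (u : V) := [set v | (v != u) && [exists x, e u x && e x v]].

Definition middles (u v : V) := [set x | [&& e u x, e x v & v != u]].

(* By absence of 4-cycles a vertex of the sphere has a unique middle. *)
Lemma card_middles (u v : V) : #|middles u v| = (v \in sphere2 u).
Proof.
rewrite inE; case: (eqVneq v u) => [->|vu] /=.
  by apply/eqP; rewrite cards_eq0; apply/eqP/setP => x; rewrite !inE eqxx !andbF.
case: existsP => [[x0 /andP[ux0 x0v]]|none].
  apply/eqP/cards1P; exists x0; apply/setP => x; rewrite !inE vu andbT.
  apply/andP/eqP => [[ux xv]|->]; last by rewrite ux0 x0v.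
  have vx0 : e v x0 by rewrite e_sym.
  have vx : e v x by rewrite e_sym.
  by case: (e_quad ux0 ux vx0 vx) => [uv|->] //; rewrite uv eqxx in vu.
apply/eqP; rewrite cards_eq0; apply/eqP/setP => x; rewrite !inE.
by apply/negP => /and3P[ux xv _]; apply: none; exists x; rewrite ux.
Qed.

(* Double counting the walks u, x, v with v != u. *)
Lemma card_sphere2 (u : V) : #|sphere2 u| = k.+1 * k.
Proof.
have -> : #|sphere2 u| = \sum_v #|middles u v|.
  by under eq_bigr do rewrite card_middles; rewrite sum_nat_bool; apply: eq_card => v; rewrite !inE.
rewrite double_count.
rewrite (sum_card_rows (b := e u) (R := fun x v => e x v && (v != u)) (d := k)) ?e_deg //.
by move=> x ux; rewrite (card_but_one (P := e x)) ?e_deg // e_sym.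
Qed.

(* The ball of radius two has 1 + (k + 1) + (k + 1) k = (k + 1)^2 + 1 vertices. *)
Lemma card_ball2 (u : V) : #|B2 u| = k.+1 ^ 2 + 1.
Proof.
have Eball : B2 u = u |: ([set v | e u v] :|: sphere2 u).
  apply/setP => v; apply/in_ball2/idP; rewrite in_setU1 in_setU !inE.
    case=> [->|uv|[x [ux xv]]]; rewrite ?eqxx ?uv ?orbT //.
    by case: eqVneq => //= vu; apply/orP; right; apply/existsP; exists x; rewrite ux.
  case/orP=> [/eqP->|/orP[uv|/andP[_ /existsP[x /andP[ux xv]]]]]; [exact: Or31|exact: Or32|].
  by apply: Or33; exists x.
have same_side v : v \in sphere2 u -> side v = side u.
  by rewrite inE => /andP[_ /existsP[x /andP[ux xv]]]; rewrite (side_path2 ux xv).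
have disj : [set v | e u v] :&: sphere2 u = set0.
  apply/setP => v; rewrite in_setI in_set0 inE; apply/negP => /andP[uv /same_side suv].
  by move: (e_side uv); rewrite suv eqxx.
have notin : u \notin [set v | e u v] :|: sphere2 u.
  rewrite in_setU !inE eqxx /= orbF; apply/negP => /e_side; by rewrite eqxx.
rewrite Eball cardsU1 notin cardsU disj cards0 subn0 e_deg card_sphere2 /=; lia.
Qed.

Lemma neighbour_in_ball2_unique (a x y b w : V) :
  side a != side b -> b \notin B2 a -> e a x -> e x y -> e y b ->
  e b w -> w \in B2 a -> w = y.
Proof.
move=> sab far ax xy yb bw /in_ball2 aw.
have nab : ~~ e a b by apply: contra far => ab; apply/in_ball2; apply: Or32.
have wb : e w b by rewrite e_sym.
case: aw => [Ew|aw|[x' [ax' x'w]]].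
- by subst w; rewrite e_sym bw in nab.
- by case/negP: far; apply/in_ball2; apply: Or33; exists w.
- by have [_ ->] := e_path3_unique sab nab ax xy yb ax' x'w wb.
Qed.

Lemma ball2_meet (a x y b : V) :
  e a x -> e x y -> e y b -> b \notin B2 a -> B2 a :&: B2 b = [set x; y].
Proof.
move=> ax xy yb far.
have say : side a = side y := side_path2 ax xy.
have sab : side a != side b by rewrite say; exact: e_side.
have far' : a \notin B2 b by apply: contra far; exact: ball2_sym.
apply/setP => w; rewrite in_setI in_set2; apply/andP/orP => [[aw bw]|].
  case: (eqVneq (side w) (side a)) => swa.
    right; apply/eqP/(neighbour_in_ball2_unique sab far ax xy yb _ aw).
    by apply: (ball2_other_side bw); rewrite swa.
  have sba : side b != side a by rewrite eq_sym.
  have [by' yx xa] : [/\ e b y, e y x & e x a] by split; rewrite e_sym.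
  by left; apply/eqP/(neighbour_in_ball2_unique sba far' by' yx xa _ bw); exact: ball2_other_side.
by case=> /eqP ->; split; apply/in_ball2;
  [ apply: Or32 | apply: Or33; exists y; split; rewrite e_sym
  | apply: Or33; exists x | apply: Or32; rewrite e_sym ].
Qed.

Lemma ball2_union_dist3 (a b : V) :
  dist_eq e a b 3 ->
  perfect_dominating e (B2 a :|: B2 b) /\ #|B2 a :|: B2 b| = 2 * k.+1 ^ 2.
Proof.
case=> in3 near; have far : b \notin B2 a := near 2 isT.
have [x [y [ax xy yb]]] := ball3_minus_ball2 in3 far.
have sab : side a != side b by rewrite (side_path2 ax xy); exact: e_side.
split; first exact: ball2_union_perfect.
have xy_neq : x != y by apply: contraTneq (e_side xy) => ->; rewrite eqxx.
rewrite cardsU (ball2_meet ax xy yb far) cards2 xy_neq !card_ball2; lia.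
Qed.

End QuadrangleGraph.

Section FieldIdentities.

Variable K : fieldType.
Local Open Scope ring_scope.

Lemma slope_unique (a a' b b' x x' : K) :
  a * x + b = a' * x + b' -> a * x' + b = a' * x' + b' -> x != x' -> a = a'.
Proof.
move=> E E' nx; apply/eqP; rewrite -subr_eq0.
have : (a - a') * (x - x') = 0.
  transitivity ((a*x+b) - (a'*x+b') - ((a*x'+b) - (a'*x'+b'))); first by ring.
  by rewrite E E'; ring.
by move/eqP; rewrite mulf_eq0 [x - x' == 0]subr_eq0 (negbTE nx) orbF.
Qed.

Lemma combine2 (u v k1 k2 e1 e2 : K) :
  e1 = 0 -> e2 = 0 -> u - v = k1 * e1 + k2 * e2 -> u = v.
Proof. by move=> -> -> /eqP; rewrite !mulr0 addr0 subr_eq0 => /eqP. Qed.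

End FieldIdentities.

Section GammaIncidence.

Variable F : finFieldType.
Local Open Scope ring_scope.

(* Turn hypotheses that are conjunctions of equations between coordinates
   into substitutions, and discard the impossible incidences. *)
Ltac crush := repeat match goal with
  | H : is_true (_ && _) |- _ => case/andP: H
  | H : is_true (_ == _) |- _ => move/eqP: H
  | |- is_true (_ && _) -> _ => case/andP
  | |- is_true (_ == _) -> _ => move/eqP
  | |- ?x = _ -> _ => (is_var x; let e := fresh in move=> e; subst x) || intro
  | |- _ = ?x -> _ => (is_var x; let e := fresh in move=> e; subst x) || intro
  | |- is_true false -> _ => done
  | |- is_true true -> _ => move=> _
  end.

Lemma no_quad (l l' p p' : point F) :
  Defs.adj1 l p -> Defs.adj1 l p' -> Defs.adj1 l' p -> Defs.adj1 l' p' -> l = l' \/ p = p'.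
Proof.
case: l => [[[[a b] c]|[b c]]|[a|]]; case: l' => [[[[a' b'] c']|[b' c']]|[a'|]];
case: p => [[[[x y] z]|[y z]]|[x|]]; case: p' => [[[[x' y'] z']|[y' z']]|[x'|]] //=;
crush; try by [left|right].
all: try (match goal with H : ?u + ?b = ?u + ?b' |- _ => move/addrI: H => H; subst; by left end).
match goal with E : ?a * ?x + ?b = ?a' * ?x + ?b', E' : ?a * ?x' + ?b = ?a' * ?x' + ?b' |- _ =>
  case: (eqVneq x x') => [->|nx]; [by right | move: (slope_unique E E' nx) => ea];
  subst a'; move/addrI: E => eb; subst b'; left end.
match goal with H : _ + ?c = _ + ?c' |- _ => by move/addrI: H => -> end.
Qed.

Ltac split_adj := rewrite /Defs.adj1 /= ?eqxx /=; repeat (apply/andP; split); rewrite ?eqxx //; apply/eqP.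

(* A walk of length three from an affine line (a, b, c) to an affine point
   (x, y, z): via the line (q, y, x) when y = a x + b, and otherwise via a
   line of slope a' through (x, y, z), where a' is obtained by solving
   a linear equation. *)
Lemma walk3_affine_affine (a b c x y z : F) :
  exists (p' m : point F), [&& Defs.adj1 (inl (inl (a, b, c))) p', Defs.adj1 m p'
                              & Defs.adj1 m (inl (inl (x, y, z)))].
Proof.
case: (eqVneq y (a * x + b)) => [Hy|Hy].
  exists (inl (inl (x, y, a^+2 * x + 2%:R * a * b + c))), (inl (inr (y, x))).
  by rewrite /Defs.adj1 /= Hy !eqxx.
have Hd : y - a * x - b != 0 by rewrite -addrA -opprD subr_eq0.
set a' := (z - a * y - a * b - c) / (y - a * x - b).
have Ha' : a' * (y - a * x - b) - (z - a * y - a * b - c) = 0 by rewrite /a' divfK // subrr.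
clearbody a'; case: (eqVneq a' a) => [Haa|Haa].
  subst a'; exists (inl (inr (a, c))), (inl (inl (a, y - a * x, c))); split_adj.
    by ring.
  by apply: (combine2 (k1 := 0) (k2 := -1) (e1 := 0) erefl Ha'); ring.
have Hd2 : a - a' != 0 by rewrite subr_eq0 eq_sym.
set t := (y - a' * x - b) / (a - a').
have Ht : (a - a') * t - (y - a' * x - b) = 0 by rewrite /t mulrC divfK // subrr.
clearbody t.
exists (inl (inl (t, a * t + b, a^+2 * t + 2%:R * a * b + c))),
       (inl (inl (a', y - a' * x, z - a'^+2 * x - 2%:R * a' * (y - a' * x)))); split_adj.
- by apply: (combine2 (k1 := 1) (k2 := 0) Ht Ha'); ring.
- by apply: (combine2 (k1 := a + a') (k2 := 1) Ht Ha'); ring.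
- by ring.
- by ring.
Qed.

Lemma walk3_affine_vertical (a b c y z : F) :
  exists (p' m : point F), [&& Defs.adj1 (inl (inl (a, b, c))) p', Defs.adj1 m p'
                              & Defs.adj1 m (inl (inr (y, z)))].
Proof.
case: (eqVneq y a) => [Hy|Hy].
  by subst y; exists (inl (inr (a, c))), (inr (Some a)); rewrite /Defs.adj1 /= !eqxx.
have Hd : (a - y)^+2 != 0 by rewrite expf_eq0 /= subr_eq0 eq_sym.
set t := (2%:R * b * (y - a) + z - c) / (a - y)^+2.
have Ht : (a - y)^+2 * t - (2%:R * b * (y - a) + z - c) = 0 by rewrite /t mulrC divfK // subrr.
clearbody t.
exists (inl (inl (t, a * t + b, a^+2 * t + 2%:R * a * b + c))), (inl (inl (y, (a - y) * t + b, z))).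
split_adj; first by ring.
by apply: (combine2 (k1 := 1) (k2 := 0) Ht (erefl (0:F))); ring.
Qed.

Lemma walk3_vertical_affine (b c x y z : F) :
  exists (p' m : point F), [&& Defs.adj1 (inl (inr (b, c))) p', Defs.adj1 m p'
                              & Defs.adj1 m (inl (inl (x, y, z)))].
Proof.
case: (eqVneq x c) => [Hx|Hx].
  by subst x; exists (inr (Some c)), (inl (inr (y, c))); rewrite /Defs.adj1 /= !eqxx.
have Hd : c - x != 0 by rewrite subr_eq0 eq_sym.
set a' := (b - y) / (c - x).
have Ha' : a' * (c - x) - (b - y) = 0 by rewrite /a' divfK // subrr.
clearbody a'.
exists (inl (inl (c, b, a'^+2 * (c - x) + z))),
       (inl (inl (a', y - a' * x, z - a'^+2 * x - 2%:R * a' * (y - a' * x)))); split_adj.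
- by apply: (combine2 (k1 := -1) (k2 := 0) Ha' (erefl (0:F))); ring.
- by ring.
- by ring.
- by ring.
Qed.

Lemma walk3_exists (l p : point F) :
  exists p' m, [&& Defs.adj1 l p', Defs.adj1 m p' & Defs.adj1 m p].
Proof.
case: l => [[[[a b] c]|[b c]]|[a|]]; case: p => [[[[x y] z]|[y z]]|[x|]].
- exact: walk3_affine_affine.
- exact: walk3_affine_vertical.
- exists (inl (inl (x, a * x + b, a^+2 * x + 2%:R * a * b + c))), (inl (inr (a * x + b, x))).
  by rewrite /Defs.adj1 /= !eqxx.
- by exists (inl (inr (a, c))), (inr (Some a)); rewrite /Defs.adj1 /= !eqxx.
- exact: walk3_vertical_affine.
- exists (inl (inl (c, b, y^+2 * c + 2%:R * y * (b - y * c) + z))), (inl (inl (y, b - y * c, z))).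
  by split_adj; ring.
- by exists (inr (Some c)), (inr None); rewrite /Defs.adj1 /= !eqxx.
- by exists (inr (Some c)), (inr None); rewrite /Defs.adj1 /= !eqxx.
- exists (inl (inr (a, z - a^+2 * x - 2%:R * a * (y - a * x)))),
         (inl (inl (a, y - a * x, z - a^+2 * x - 2%:R * a * (y - a * x)))).
  by split_adj; ring.
- by exists (inr None), (inr (Some y)); rewrite /Defs.adj1 /= !eqxx.
- by exists (inr None), (inr None).
- by exists (inr None), (inr (Some a)).
- by exists (inr (Some x)), (inl (inr (y, x))); rewrite /Defs.adj1 /= !eqxx.
- by exists (inr None), (inr (Some y)); rewrite /Defs.adj1 /= !eqxx.
- by exists (inr (Some x)), (inr None).
- by exists (inr None), (inr None).
Qed.

(* Prove #|S| = q + 1 from an explicit parametrization [f] of S by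
   [option F]: injectivity and membership by computation, surjectivity by
   solving the incidence equations. *)
Ltac card_by_param f :=
  apply: (card_option_param (f := f));
  [ let o := fresh in let o' := fresh in
    move=> [o|] [o'|] //=; case; intros; subst; done
  | let v := fresh in let H := fresh in
    move=> v; rewrite inE; case: v => [[[[? ?] ?]|[? ?]]|[?|]] H //=;
    move: H; rewrite /Defs.adj1 /=; crush;
    solve [ exists None; reflexivity | eexists (Some _); reflexivity
          | match goal with |- exists _, inl (inl (?a, _, _)) = _ =>
              exists (Some a); simpl; congr (inl (inl (_, _, _))); ring end ]
  | let o := fresh in move=> [o|]; rewrite inE; split_adj; ring ].

Lemma deg_line (l : point F) : #|[set p | Defs.adj1 l p]| = #|F|.+1.
Proof.
case: l => [[[[a b] c]|[b c]]|[a|]].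
- card_by_param (fun o : option F => match o return point F with
    Some x => inl (inl (x, a * x + b, a^+2 * x + 2%:R * a * b + c)) | None => inl (inr (a, c)) end).
- card_by_param (fun o : option F => match o return point F with
    Some x => inl (inl (c, b, x)) | None => inr (Some c) end).
- card_by_param (fun o : option F => match o return point F with
    Some x => inl (inr (a, x)) | None => inr None end).
- card_by_param (fun o : option F => (inr o : point F)).
Qed.

Lemma deg_point (p : point F) : #|[set l | Defs.adj1 l p]| = #|F|.+1.
Proof.
case: p => [[[[x y] z]|[y z]]|[a|]].
- card_by_param (fun o : option F => match o return point F with
    Some a => inl (inl (a, y - a * x, z - a^+2 * x - 2%:R * a * (y - a * x)))
  | None => inl (inr (y, x)) end).
- card_by_param (fun o : option F => match o return point F with
    Some b => inl (inl (y, b, z)) | None => inr (Some y) end).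
- card_by_param (fun o : option F => match o return point F with
    Some b => inl (inr (b, a)) | None => inr None end).
- card_by_param (fun o : option F => (inr o : point F)).
Qed.

Lemma card_point : #|point F| = (#|F|.+1 * (#|F| * #|F| + 1))%N.
Proof. by rewrite /point !card_sum !card_prod card_option; ring. Qed.

End GammaIncidence.

Section GammaQuadrangle.

Variable F : finFieldType.

Local Notation G := (@gamma_adj F).

Lemma gamma_sym : symmetric G.
Proof. by move=> [[] x] [[] y]. Qed.

Lemma gamma_side (u v : vertex F) : G u v -> u.1 != v.1.
Proof. by case: u => [[] x]; case: v => [[] y]. Qed.

(* The neighbours of a vertex are the points of a line or the lines through
   a point, according to its side. *)
Lemma gamma_deg (u : vertex F) : #|[set v | G u v]| = #|F|.+1.
Proof.
have side_inj (b : bool) : injective (pair b : point F -> vertex F) by move=> ? ? [].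
case: u => [[] x].
- rewrite -(deg_line x) -(card_imset _ (side_inj false)); apply: eq_card => [[[] y]].
    by rewrite !inE; apply/esym/imsetP => [[z _ []]].
  by rewrite inE mem_imset // inE.
- rewrite -(deg_point x) -(card_imset _ (side_inj true)); apply: eq_card => [[[] y]].
    by rewrite inE mem_imset // inE.
  by rewrite !inE; apply/esym/imsetP => [[z _ []]].
Qed.

Lemma gamma_quad (u v u' v' : vertex F) :
  G u v -> G u v' -> G u' v -> G u' v' -> u = u' \/ v = v'.
Proof.
case: u => [[] l]; case: v => [[] p]; case: u' => [[] l']; case: v' => [[] p'] //=.
  by move=> e1 e2 e3 e4; case: (no_quad e1 e2 e3 e4) => ->; [left|right].
by move=> e1 e2 e3 e4; case: (no_quad e1 e3 e2 e4) => ->; [right|left].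
Qed.

Lemma gamma_path3 (u v : vertex F) :
  u.1 != v.1 -> ~~ G u v -> exists x y, [/\ G u x, G x y & G y v].
Proof.
case: u => [[] l]; case: v => [[] p] //= _ _.
  by have [p' [m /and3P[lp' mp' mp]]] := walk3_exists l p; exists (false, p'), (true, m).
by have [p' [m /and3P[pl' ml' ml]]] := walk3_exists p l; exists (true, m), (false, p').
Qed.

Lemma adj1_path3_unique (l p p1 m1 p2 m2 : point F) :
  ~~ Defs.adj1 l p -> Defs.adj1 l p1 -> Defs.adj1 m1 p1 -> Defs.adj1 m1 p ->
  Defs.adj1 l p2 -> Defs.adj1 m2 p2 -> Defs.adj1 m2 p -> p1 = p2 /\ m1 = m2.
Proof.
apply: path3_unique => //.
- exact: no_quad.
- by move=> l' p' _; exact: walk3_exists.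
- exact: deg_line.
- exact: deg_point.
- exact: card_point.
Qed.

Lemma gamma_path3_unique (u v x1 y1 x2 y2 : vertex F) :
  u.1 != v.1 -> ~~ G u v -> G u x1 -> G x1 y1 -> G y1 v ->
  G u x2 -> G x2 y2 -> G y2 v -> x1 = x2 /\ y1 = y2.
Proof.
case: u => [[] l]; case: v => [[] p] //= _ off;
case: x1 => [[] a1]; case: y1 => [[] b1]; case: x2 => [[] a2]; case: y2 => [[] b2] //=.
  move=> e1 e2 e3 e4 e5 e6.
  by case: (adj1_path3_unique off e1 e2 e3 e4 e5 e6) => -> ->.
move=> e1 e2 e3 e4 e5 e6.
by case: (adj1_path3_unique off e3 e2 e1 e6 e5 e4) => -> ->.
Qed.

End GammaQuadrangle.

Theorem theorem2 (F : finFieldType) (alpha beta : vertex F) :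
  dist_eq (@gamma_adj F) alpha beta 3 ->
  perfect_dominating (@gamma_adj F)
    (ball (@gamma_adj F) 2 alpha :|: ball (@gamma_adj F) 2 beta) /\
  #|ball (@gamma_adj F) 2 alpha :|: ball (@gamma_adj F) 2 beta| = (2 * (#|F| + 1) ^ 2)%N.
Proof.
rewrite addn1; apply: ball2_union_dist3.
- exact: gamma_sym.
- exact: gamma_side.
- exact: gamma_deg.
- exact: gamma_quad.
- exact: gamma_path3.
- exact: gamma_path3_unique.
Qed.
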